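(* Let $n\ge1$ and $P=2\lceil\log_2 n+\log_2\log_2 n\rceil+1$. Let $a_0\in[0,2]$, $a_1\in[0,P-1]$, and $\mathcal{C}'_{2,3,P}=\{\boldsymbol{z}\in\Sigma_2^n:\mathrm{VT}^{(0)}(\boldsymbol{z})\equiv a_0\pmod3,\ \mathrm{VT}^{(1)}(\boldsymbol{z})\equiv a_1\pmod P\}$. Then the code $$\mathcal{C}=\{\boldsymbol{x}\in\mathcal{ALL}(n,\tfrac{P-1}{2}):\ \mathbf{1}(\boldsymbol{x})\in\mathcal{C}'_{2,3,P}\}\subseteq\Sigma_2^n$$ is a $2$-read $(n,4)_2$-code. Moreover, there exists a choice of $a_0,a_1$ such that $r(\mathcal{C})\le\log_2\log_2n+\log_26+o(1)$ as $n\to\infty$.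
   Context: $\Sigma_2=\{0,1\}$. For $\boldsymbol{x}\in\Sigma_2^n$, $x[i]$ is its $i$-th entry, with $x[i]=0$ for $i\notin[1,n]$. $\mathrm{VT}^{(k)}(\boldsymbol{z})=\sum_{i=1}^n i^kz[i]$. The indicator sequence $\mathbf{1}(\boldsymbol{x})$ has entries $\mathbf{1}(\boldsymbol{x})[i]=x[i]+x[i-1]\bmod 2$, $i\in[1,n]$. A sequence is alternating if it has the form $abab\cdots$ with $a\ne b$; $\mathcal{ALL}(n,L)$ is the set of $\boldsymbol{x}\in\Sigma_2^n$ all of whose alternating substrings (contiguous blocks) have length at most $L$. $\mathcal{R}(\boldsymbol{x})$ is the length-$(n+1)$ vector whose $i$-th entry is the multiset $\{\{x[i-1],x[i]\}\}$; $\mathcal{C}$ is a $2$-read $(n,d)_2$-code if $d_H(\mathcal{R}(\boldsymbol{x}),\mathcal{R}(\boldsymbol{y}))\ge d$ for distinct $\boldsymbol{x},\boldsymbol{y}\in\mathcal{C}$. Redundancy: $r(\mathcal{C})=n-\log_2|\mathcal{C}|$. *)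

From Stdlib Require Import Reals.
From mathcomp Require Import all_boot all_order all_algebra.
From mathcomp Require Import Rstruct.

Set Implicit Arguments.
Unset Strict Implicit.
Unset Printing Implicit Defensive.

(* log base 2 on the reals (Stdlib ln, ln x = 0 for x <= 0) *)
Definition log2 (x : R) : R := Rdiv (ln x) (ln 2).

(* entry x[i], 1-indexed, with x[i] = 0 for i outside [1,n] *)
Definition xat (n : nat) (x : n.-tuple bool) (i : nat) : bool :=
  if (1 <= i <= n)%N then nth false x i.-1 else false.

Definition VT (k n : nat) (z : n.-tuple bool) : nat :=
  (\sum_(1 <= i < n.+1) i ^ k * xat z i)%N.

Definition ind (n : nat) (x : n.-tuple bool) : n.-tuple bool :=
  [tuple of mkseq (fun j => xat x j.+1 (+) xat x j) n].

Definition alternating (s : seq bool) : bool :=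
  (0 < size s)%N &&
  all (fun i => nth false s i != nth false s i.+1) (iota 0 (size s).-1).

Definition ALL (n L : nat) (x : n.-tuple bool) : bool :=
  [forall i : 'I_n.+1, forall m : 'I_n.+1,
    ((i + m <= n)%N && alternating (take m (drop i x))) ==> (m <= L)%N].

Definition Cprime (n a0 a1 P : nat) (z : n.-tuple bool) : bool :=
  (VT 0 z == a0 %[mod 3]) && (VT 1 z == a1 %[mod P]).

(* R(x)[i] = multiset {{x[i-1], x[i]}} for i in [1, n+1] *)
Definition Rread (n : nat) (x : n.-tuple bool) : seq (seq bool) :=
  mkseq (fun j => [:: xat x j; xat x j.+1]) n.+1.

Definition dH_read (n : nat) (x y : n.-tuple bool) : nat :=
  count (fun p => ~~ perm_eq p.1 p.2) (zip (Rread x) (Rread y)).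

Definition two_read_code (n d : nat) (C : pred (n.-tuple bool)) : Prop :=
  forall x y, C x -> C y -> x != y -> (d <= dH_read x y)%N.

Definition Pn (n : nat) : nat :=
  (2 * `|Num.ceil (Rplus (log2 (INR n)) (log2 (log2 (INR n))))|%N + 1)%N.

Definition code (n a0 a1 : nat) : pred (n.-tuple bool) :=
  fun x => ALL ((Pn n).-1./2) x && Cprime a0 a1 (Pn n) (ind x).

Definition redundancy (n : nat) (C : pred (n.-tuple bool)) : R :=
  Rminus (INR n) (log2 (INR #|C|)).

Arguments code n a0 a1 : clear implicits.

(* Let x <> y be codewords with fewer than four differing reads. Every end of a
   maximal block of positions where x and y differ is a differing read, so x and y
   differ exactly on one interval (k1, k2]. Then 1(x) and 1(y) differ exactly at
   k1 + 1 and (if it is <= n) at k2 + 1, with opposite bits; VT^(0) mod 3 rules out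
   every other pattern, and VT^(1) mod P then gives P | k2 - k1. On (k1, k2] the word
   y is the complement of x, so each pair of equal adjacent bits of x there is one
   more differing read: there is at most one, hence x[k1+1..k2] is made of two
   alternating runs, of length at most (P - 1)/2 each, and k2 - k1 < P.

   For the redundancy, with L = (P - 1)/2 = ceil(log n + log log n) we have
   2^L >= n log n, while at most n 2^(n-L) words violate ALL(n, L) (an alternating
   window is determined by its first bit). One of the 3P cosets of C'_{2,3,P} carries
   at least a 1/(3P) share of ALL(n, L), so |C| >= 2^n (1 - 1/log n) / (3P) with
   3P = (6 + o(1)) log n. *)

From Pilot Require Import Defs.
From Stdlib Require Import Reals Lra.
From mathcomp Require Import all_boot all_order all_algebra.
From mathcomp Require Import Rstruct zify.

Set Implicit Arguments.
Unset Strict Implicit.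
Unset Printing Implicit Defensive.

(** * Minimum distance *)

Section Entries.
Variables (n : nat) (x : n.-tuple bool).

Lemma xat_out m : (n < m)%N -> xat x m = false.
Proof. by rewrite /xat; case: ifP => //; lia. Qed.

Lemma nth_xat k : (k < n)%N -> nth false x k = xat x k.+1.
Proof. by move=> kn; rewrite /xat ifT //; lia. Qed.

Lemma xat_ind m : (1 <= m <= n)%N -> xat (Defs.ind x) m = xat x m (+) xat x m.-1.
Proof.
move=> mn; rewrite {1}/xat mn nth_mkseq; last by lia.
by rewrite prednK //; case/andP: mn.
Qed.

End Entries.

Section Mismatch.
Variables (n : nat) (x y : n.-tuple bool).

Definition mismatch : pred nat := fun m => xat x m != xat y m.

Definition read_mismatch : pred nat := fun j =>
  ~~ perm_eq [:: xat x j; xat x j.+1] [:: xat y j; xat y j.+1].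

Lemma dH_read_count : dH_read x y = count read_mismatch (iota 0 n.+1).
Proof. by rewrite /dH_read /Rread /mkseq zip_map count_map. Qed.

Lemma read_mismatchE j : read_mismatch j =
  (mismatch j != mismatch j.+1) || [&& mismatch j, mismatch j.+1 & xat x j == xat x j.+1].
Proof.
by rewrite /read_mismatch /mismatch;
  case: (xat x j); case: (xat x j.+1); case: (xat y j); case: (xat y j.+1).
Qed.

Lemma exists_mismatch : x != y -> exists m, mismatch m.
Proof.
move=> xy; have /existsP[k mk] : [exists k : 'I_n, mismatch k.+1].
  apply: contraNT xy => /existsPn same.
  apply/eqP/val_inj/(@eq_from_nth _ false); rewrite !size_tuple // => k kn.
  by rewrite !nth_xat //; have /negPn/eqP := same (Ordinal kn).
by exists k.+1.
Qed.

Lemma ind_mismatch m : (m <= n)%N ->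
  (xat (Defs.ind x) m != xat (Defs.ind y) m) = (mismatch m.-1 != mismatch m).
Proof.
case: m => [//|m] mn; rewrite !xat_ind /mismatch //=.
by case: (xat x m); case: (xat x m.+1); case: (xat y m); case: (xat y m.+1).
Qed.

End Mismatch.

Lemma four_le_count (p : pred nat) m a b c e :
  (a < b < c)%N -> (c < e < m)%N -> p a -> p b -> p c -> p e ->
  (4 <= count p (iota 0 m))%N.
Proof.
move=> abc cem pa pb pc pe; rewrite -size_filter.
apply: (@uniq_leq_size _ [:: a; b; c; e]).
  apply: (sorted_uniq ltn_trans ltnn) => /=.
  by case/andP: abc => -> ->; case/andP: cem => ->.
move=> z; rewrite !inE mem_filter mem_iota => /or4P[] /eqP-> /=;
  rewrite ?pa ?pb ?pc ?pe /=; lia.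
Qed.

Lemma exists_rise (p : pred nat) a b : (a < b)%N -> ~~ p a -> p b ->
  exists2 k, (a <= k < b)%N & ~~ p k && p k.+1.
Proof.
elim: b => // b IH; rewrite ltnS leq_eqVlt => /predU1P[<- | ab] npa pb.
  by exists a; rewrite ?leqnn ?npa.
have [pb'|npb'] := boolP (p b).
  by have [k /andP[k1 k2] hk] := IH ab npa pb'; exists k; rewrite // k1 ltnS (ltnW k2).
by exists b; rewrite ?npb' // (ltnW ab) ltnSn.
Qed.

Section FewSwitches.
Variables (d : pred nat) (n : nat).
Hypotheses (d0 : ~~ d 0) (d_out : forall m, (n < m)%N -> ~~ d m) (d_ex : exists m, d m).
Hypothesis no_four_switches : forall a b c e, (a < b < c)%N -> (c < e <= n)%N ->
  d a != d a.+1 -> d b != d b.+1 -> d c != d c.+1 -> d e != d e.+1 -> False.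

Lemma interval_of_few_switches :
  exists k1 k2, (k1 < k2 <= n)%N /\ forall m, d m = (k1 < m <= k2)%N.
Proof.
have ex1 : exists m, d m.+1 by case: d_ex => -[|m] dm; [move: d0; rewrite dm | exists m].
case: (ex_minnP ex1) => k1 dk1 min1.
have k1n : (k1 < n)%N by rewrite ltnNge; apply: contraL dk1 => ?; apply: d_out; lia.
have low m : (m <= k1)%N -> ~~ d m by case: m => // m mk1; apply/negP => /min1; lia.
have ex2 : exists m, (k1 < m)%N && ~~ d m.+1 by exists n; rewrite k1n d_out.
case: (ex_minnP ex2) => k2 /andP[k12 dk2] min2.
have k2n : (k2 <= n)%N by apply: min2; rewrite k1n d_out.
have mid m : (k1 < m <= k2)%N -> d m.
  case/andP=> m1 m2; apply/negPn/negP => ndm.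
  have m1' : (k1.+1 < m)%N.
    by rewrite ltn_neqAle m1 andbT; apply: contraNneq ndm => <-.
  have := min2 m.-1; rewrite prednK ?ndm; lia.
have high m : (k2 < m)%N -> ~~ d m.
  move=> k2m; apply/negP => dm.
  have k2m' : (k2.+1 < m)%N.
    by rewrite ltn_neqAle k2m andbT; apply: contraTneq dm => <-.
  have mn : (m <= n)%N by rewrite leqNgt; apply: contraL dm; apply: d_out.
  have [r /andP[r1 r2] /andP[nr dr]] := exists_rise k2m' dk2 dm.
  have [f /andP[f1 f2] /andP[df ndf]] :=
    @exists_rise (predC d) m n.+1 mn (etrans (negbK _) dm) (d_out (ltnSn n)).
  rewrite /= negbK in df.
  apply: (no_four_switches (a := k1) (b := k2) (c := r) (e := f)).
  - by rewrite k12 r1.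
  - by rewrite (leq_trans r2 f1) -ltnS.
  - by rewrite (negbTE (low k1 (leqnn _))) dk1.
  - by rewrite mid ?leqnn ?k12 // (negbTE dk2).
  - by rewrite (negbTE nr) dr.
  - by rewrite df (negbTE ndf).
exists k1, k2; split=> [|m]; first by rewrite k12.
case: (leqP m k1) => [mk1|k1m] /=; first exact/negbTE/low.
case: (leqP m k2) => [mk2|k2m]; first by apply: mid; rewrite k1m mk2.
exact/negbTE/high.
Qed.

End FewSwitches.

Lemma VT_term_pick n (z : n.-tuple bool) k i :
  (\sum_(1 <= m < n.+1) (m == i) * (m ^ k * xat z m) = i ^ k * xat z i)%N.
Proof.
have [iin|iout] := boolP (i \in index_iota 1 n.+1).
  rewrite (bigD1_seq i) ?iota_uniq //= eqxx mul1n big1 ?addn0 // => m /negbTE->.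
  by rewrite mul0n.
rewrite big1_seq => [|m /andP[_ mi]]; last by rewrite (negbTE (memPn iout _ mi)) mul0n.
by rewrite mem_index_iota /xat in iout *; rewrite (negbTE iout) muln0.
Qed.

Lemma VT_exchange n (z z' : n.-tuple bool) k i j : i != j ->
  (forall m, m != i -> m != j -> xat z m = xat z' m) ->
  (VT k z + (i ^ k * xat z' i + j ^ k * xat z' j) =
   VT k z' + (i ^ k * xat z i + j ^ k * xat z j))%N.
Proof.
move=> ij same; rewrite -!VT_term_pick /VT -!big_split /=; apply: eq_bigr => m _.
have [->|mi] := eqVneq m i; first by rewrite (negbTE ij) !mul1n !mul0n !addn0 addnC.
have [->|mj] := eqVneq m j; first by rewrite !mul1n !mul0n !add0n addnC.
by rewrite same.
Qed.

Lemma Cprime_two_flips_dvd n (z z' : n.-tuple bool) a0 a1 P i j :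
  Cprime a0 a1 P z -> Cprime a0 a1 P z' -> (i < j)%N ->
  (forall m, m != i -> m != j -> xat z m = xat z' m) -> xat z' i = ~~ xat z i ->
  (P %| j - i)%N.
Proof.
case/andP=> /eqP z0 /eqP z1 /andP[/eqP z'0 /eqP z'1] ij same flip_i.
have E k := VT_exchange k (negbT (ltn_eqF ij)) same.
have [zj flip_j] : xat z j = ~~ xat z i /\ xat z' j = ~~ xat z j.
  move: (E 0%N) z0 z'0; rewrite !expn0 !mul1n flip_i.
  case: (xat z i) (xat z j) (xat z' j) => [] [] [] /=; split=> //; lia.
move: (E 1%N); rewrite !expn1 flip_i flip_j zj.
case: (xat z i) => /=; rewrite ?muln0 ?muln1 ?add0n ?addn0 => E1.
- have le : (VT 1 z <= VT 1 z')%N by lia.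
  have : (VT 1 z' == VT 1 z %[mod P])%N by rewrite z1 z'1.
  by rewrite eqn_mod_dvd // (_ : VT 1 z' - VT 1 z = j - i)%N //; lia.
- have le : (VT 1 z' <= VT 1 z)%N by lia.
  have : (VT 1 z == VT 1 z' %[mod P])%N by rewrite z1 z'1.
  by rewrite eqn_mod_dvd // (_ : VT 1 z - VT 1 z' = j - i)%N //; lia.
Qed.

Section Runs.
Variables (n L : nat) (x : n.-tuple bool).
Hypothesis ALLx : ALL L x.

Lemma ALL_run a b : (0 < a)%N -> (a <= b <= n)%N ->
  (forall m, (a <= m < b)%N -> xat x m != xat x m.+1) -> (b - a < L)%N.
Proof.
case: a => // a _ /andP[ab bn] alt.
move/forallP/(_ (inord a))/forallP/(_ (inord (b - a))): ALLx.
rewrite !inordK; [move/implyP => run | lia | lia].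
suff: (b - a <= L)%N by lia.
apply: run; apply/andP; split; first lia.
rewrite /alternating size_takel ?size_drop ?size_tuple; last lia.
apply/andP; split; first lia.
apply/allP => k; rewrite mem_iota add0n /= => kb.
rewrite !nth_take ?nth_drop; [|lia|lia].
rewrite !nth_xat ?addnS; [apply: alt | | ]; lia.
Qed.

Lemma ALL_two_runs a b : (0 < a)%N -> (a <= b <= n)%N ->
  (forall m m', (a <= m)%N -> (m < m' < b)%N ->
     xat x m == xat x m.+1 -> xat x m' == xat x m'.+1 -> False) ->
  (b - a < L + L)%N.
Proof.
move=> a0 /andP[ab bn] one_eq.
have [/existsP[m /andP[/andP[am mb] eqm]] | /existsPn alt] :=
  boolP [exists m : 'I_n, (a <= m < b) && (xat x m == xat x m.+1)].
  have left_run : (m - a < L)%N.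
    apply: ALL_run => // [|k /andP[ak km]]; first by rewrite am (ltnW (ltn_ord m)).
    by apply/negP => eqk; apply: (one_eq k m); rewrite ?km.
  have right_run : (b - m.+1 < L)%N.
    apply: ALL_run => // [|k /andP[mk kb]]; first by rewrite mb.
    by apply/negP => eqk; apply: (one_eq m k); rewrite ?mk.
  lia.
have : (b - a < L)%N.
  apply: ALL_run => [||k /andP[ak kb]]; rewrite ?ab //.
  have kn : (k < n)%N by apply: leq_trans kb bn.
  by have := alt (Ordinal kn); rewrite /= ak kb.
lia.
Qed.

End Runs.

Lemma Pn_odd n : Pn n = ((Pn n).-1./2).*2.+1.
Proof. by rewrite /Pn addn1 /= mul2n doubleK. Qed.

Lemma code_two_read n a0 a1 : two_read_code 4 (code n a0 a1).
Proof.
move=> x y /andP[ALLx Cx] /andP[_ Cy] xy.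
rewrite dH_read_count leqNgt; apply/negP => few.
have no_four a b c e : (a < b < c)%N -> (c < e <= n)%N ->
    read_mismatch x y a -> read_mismatch x y b -> read_mismatch x y c ->
    read_mismatch x y e -> False.
  by move=> abc cen ra rb rc re; have := four_le_count (m := n.+1) abc cen ra rb rc re; lia.
have [k1 [k2 [/andP[k12 k2n] mismatchE]]] :
    exists k1 k2, (k1 < k2 <= n)%N /\ forall m, mismatch x y m = (k1 < m <= k2)%N.
  apply: interval_of_few_switches => [//|m nm||a b c e abc cen sa sb sc se].
  - by rewrite /mismatch !xat_out.
  - exact: exists_mismatch.
  - by apply: (no_four a b c e abc cen); rewrite read_mismatchE ?sa ?sb ?sc ?se.
have ind_same m : m != k1.+1 -> m != k2.+1 ->
    xat (Defs.ind x) m = xat (Defs.ind y) m.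
  move=> m1 m2; have [mn|nm] := leqP m n; last by rewrite !xat_out.
  apply/eqP; rewrite -[_ == _]negbK ind_mismatch // !mismatchE.
  have -> : (k1 < m.-1 <= k2)%N = (k1 < m <= k2)%N.
    by apply/idP/idP; move: m1 m2; clear; lia.
  by rewrite eqxx.
have flip : xat (Defs.ind y) k1.+1 = ~~ xat (Defs.ind x) k1.+1.
  have : xat (Defs.ind x) k1.+1 != xat (Defs.ind y) k1.+1.
    by rewrite ind_mismatch ?(leq_trans k12 k2n) // !mismatchE ltnn ltnSn k12.
  by case: (xat _ k1.+1) (xat _ k1.+1) => [] [].
have P_dvd : (Pn n %| k2.+1 - k1.+1)%N :=
  Cprime_two_flips_dvd (i := k1.+1) (j := k2.+1) Cx Cy k12 ind_same flip.
have switch_k1 : read_mismatch x y k1.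
  by rewrite read_mismatchE !mismatchE ltnn ltnSn k12.
have switch_k2 : read_mismatch x y k2.
  by rewrite read_mismatchE !mismatchE ltnn leqnn k12 andbF.
(* On (k1, k2] y is the complement of x, so equal adjacent bits of x there are
   differing reads. *)
have short : (k2 - k1.+1 < (Pn n).-1./2 + (Pn n).-1./2)%N.
  apply: (ALL_two_runs ALLx) => [//||m m' k1m /andP[mm' m'k2] eqm eqm'].
    by rewrite k12 k2n.
  have flat p : (k1 < p < k2)%N -> xat x p == xat x p.+1 -> read_mismatch x y p.
    move=> /andP[k1p pk2] eqp; rewrite read_mismatchE !mismatchE eqp.
    by rewrite k1p (ltnW pk2) pk2 ltnS (ltnW k1p) orbT.
  apply: (no_four k1 m m' k2) => //; rewrite ?flat //; apply/andP; split => //.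
  - exact: ltn_trans mm' m'k2.
  - exact: ltn_trans k1m mm'.
have pos : (0 < k2.+1 - k1.+1)%N by rewrite subn_gt0.
move: (dvdn_leq pos P_dvd) (Pn_odd n) short; clear; lia.
Qed.

(** * Counting codewords *)

Lemma alternatingE s : alternating s ->
  s = mkseq (fun k => head false s (+) odd k) (size s).
Proof.
case/andP=> _ /allP alt; apply: (@eq_from_nth _ false); rewrite ?size_mkseq // => k ks.
rewrite nth_mkseq //; elim: k ks => [|k IH] ks; first by rewrite nth0 addbF.
have neq : nth false s k != nth false s k.+1 by apply: alt; rewrite mem_iota; lia.
rewrite IH ?(ltnW ks) //= addbN in neq *.
by case: (_ (+) _) neq; case: (nth false s k.+1).
Qed.

Lemma alternating_take s k : alternating s -> (0 < k)%N -> alternating (take k s).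
Proof.
case/andP=> s0 /allP alt k0; rewrite /alternating size_take_min.
apply/andP; split; first by lia.
apply/allP => j; rewrite mem_iota add0n => jk.
rewrite !nth_take ?alt ?mem_iota; lia.
Qed.

(* Windows are 0-indexed on the underlying sequence, unlike [xat]. *)
Definition alt_window n L i (x : n.-tuple bool) : bool :=
  (i + L.+1 <= n)%N && alternating (take L.+1 (drop i x)).

Lemma cat_take_window (T : Type) (s : seq T) i m :
  take i s ++ take m (drop i s) ++ drop (i + m) s = s.
Proof. by rewrite addnC -drop_drop !cat_take_drop. Qed.

Lemma card_alt_window n L i :
  (#|[pred x : n.-tuple bool | alt_window L i x]| * 2 ^ L <= 2 ^ n)%N.
Proof.
have [iLn|nLi] := leqP (i + L.+1) n; last first.
  by rewrite eq_card0 // => x; rewrite inE /alt_window leqNgt nLi.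
rewrite (_ : 2 ^ n = 2 ^ (n - L) * 2 ^ L)%N; last by rewrite -expnD subnK //; lia.
rewrite leq_mul2r; apply/orP; right.
have window (z : n.-tuple bool) : alternating (take L.+1 (drop i z)) ->
    take L.+1 (drop i z) = mkseq (fun k => nth false z i (+) odd k) L.+1.
  move=> wz; rewrite {1}(alternatingE wz) size_takel ?size_drop ?size_tuple; last lia.
  by rewrite -nth0 nth_take // nth_drop addn0.
have sz (x : n.-tuple bool) : size (take i.+1 x ++ drop (i + L.+1) x) == (n - L)%N.
  by rewrite size_cat size_takel ?size_drop size_tuple; lia.
rewrite (_ : 2 ^ (n - L) = #|{: (n - L).-tuple bool}|)%N; last by rewrite card_tuple card_bool.
apply: (@leq_card_in _ _ (fun x => Tuple (sz x))) => x y.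
rewrite !inE /alt_window iLn /= => wx wy /(congr1 val) /= /eqP.
have i_n : (i < n)%N by lia.
rewrite eqseq_cat ?size_takel ?size_tuple // !(take_nth false) ?size_tuple //.
case/andP; rewrite eqseq_rcons => /andP[/eqP pre /eqP xi] /eqP suf.
apply: val_inj; rewrite /= -(cat_take_window x i L.+1) -(cat_take_window y i L.+1).
by rewrite pre suf window // window // xi.
Qed.

Lemma card_le_sum_of_cover (T I : finType) (A : {pred T}) (B : I -> {pred T}) :
  (forall x, x \in A -> exists i, x \in B i) -> (#|A| <= \sum_i #|B i|)%N.
Proof.
move=> cover.
have cardE (C : {pred T}) : #|C| = (\sum_x (x \in C))%N.
  by rewrite -sum1_card big_mkcond /=; apply: eq_bigr => x _; case: (x \in C).
rewrite (eq_bigr _ (fun i _ => cardE (B i))) exchange_big cardE /=.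
apply: leq_sum => x _; case xA: (x \in A) => //.
by have [i xi] := cover x xA; rewrite (bigD1 i) //= xi.
Qed.

Lemma notALL_window n L (x : n.-tuple bool) :
  ~~ ALL L x -> exists i : 'I_n, alt_window L i x.
Proof.
case/forallPn => i /forallPn[m]; rewrite negb_imply => /andP[/andP[im altm] Lm].
have i_n : (i < n)%N by lia.
exists (Ordinal i_n); apply/andP; split=> /=; first lia.
rewrite -(@take_takel _ L.+1 m); last lia.
exact: alternating_take altm _.
Qed.

Lemma card_notALL n L :
  (#|[pred x : n.-tuple bool | ~~ ALL L x]| * 2 ^ L <= n * 2 ^ n)%N.
Proof.
apply: (@leq_trans ((\sum_(i < n) #|[pred x : n.-tuple bool | alt_window L i x]|) * 2 ^ L)).
  rewrite leq_mul2r; apply/orP; right; apply: card_le_sum_of_cover => x.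
  by rewrite inE => /notALL_window[i wi]; exists i; rewrite inE.
rewrite big_distrl /=; apply: (@leq_trans (\sum_(i < n) 2 ^ n)).
  by apply: leq_sum => i _; apply: card_alt_window.
by rewrite sum_nat_const card_ord.
Qed.

Lemma pigeonhole_fiber (T J : finType) (A : {pred T}) (f : T -> J) : (0 < #|J|)%N ->
  exists j, (#|A| <= #|J| * #|[pred x in A | f x == j]|)%N.
Proof.
move=> J0; have [j jmax] := eq_bigmax (fun j => #|[pred x in A | f x == j]|) J0.
exists j; apply: leq_trans (card_le_sum_of_cover (B := fun j => [pred x in A | f x == j]) _) _.
  by move=> x xA; exists (f x); rewrite inE xA eqxx.
by rewrite -jmax -sum_nat_const leq_sum // => i _; apply: leq_bigmax.
Qed.

Lemma exists_large_code n : exists a0 a1, [/\ (a0 < 3)%N, (a1 < Pn n)%N &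
  (#|[pred x : n.-tuple bool | ALL (Pn n).-1./2 x]| <= 3 * Pn n * #|code n a0 a1|)%N].
Proof.
have P0 : (0 < Pn n)%N by rewrite Pn_odd.
pose f (x : n.-tuple bool) : 'I_3 * 'I_(Pn n) :=
  (Ordinal (ltn_pmod (VT 0 (Defs.ind x)) (isT : 0 < 3)%N),
   Ordinal (ltn_pmod (VT 1 (Defs.ind x)) P0)).
have J0 : (0 < #|{: 'I_3 * 'I_(Pn n)}|)%N by rewrite card_prod !card_ord muln_gt0 P0.
have [[j0 j1] dense] := pigeonhole_fiber [pred x : n.-tuple bool | ALL (Pn n).-1./2 x] f J0.
exists j0, j1; split=> //.
suff <- : #|[pred x in [pred x : n.-tuple bool | ALL (Pn n).-1./2 x] | f x == (j0, j1)]| =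
          #|code n j0 j1| by rewrite card_prod !card_ord in dense.
apply: eq_card => x; rewrite !inE /code /Cprime xpair_eqE -!val_eqE /=.
by rewrite !(modn_small (ltn_ord _)).
Qed.

Lemma card_ALL_lower n L :
  (2 ^ n * 2 ^ L <= #|[pred x : n.-tuple bool | ALL L x]| * 2 ^ L + n * 2 ^ n)%N.
Proof.
have total : (#|[pred x : n.-tuple bool | ALL L x]| +
              #|[pred x : n.-tuple bool | ~~ ALL L x]| = 2 ^ n)%N.
  by rewrite -card_bool -card_tuple -(cardC [pred x | ALL L x]).
by rewrite -{1}total mulnDl leq_add2l card_notALL.
Qed.

(** * Redundancy *)

Section Ceiling.
Import Num.Theory.

Lemma ceil_bounds (r : R) : Rle 0 r ->
  Rle r (INR `|Num.ceil r|%N) /\ Rlt (INR `|Num.ceil r|%N) (Rplus r 1).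
Proof.
move=> r0; have r_gt_m1 : Rlt (Ropp 1) r by lra.
have c0 : (0 <= Num.ceil r)%R by rewrite ceil_ge0; apply/RltP; exact: r_gt_m1.
have := ceil_itv r; rewrite -(gez0_abs c0) intrB; set c := `|Num.ceil r|%N.
case/andP=> /RltP lo /RleP hi.
have lo' : Rlt (Rminus (INR c) 1) r by rewrite INRE.
have hi' : Rle r (INR c) by rewrite INRE.
by rewrite absz_nat; split; lra.
Qed.

End Ceiling.

Section Asymptotics.
Local Open Scope R_scope.

Lemma ln_le x y : 0 < x -> x <= y -> ln x <= ln y.
Proof. by move=> x0 [xy|<-]; [left; apply: ln_increasing | right]. Qed.

Lemma ln1p_le d : 0 <= d -> ln (1 + d) <= d.
Proof. by move=> d0; rewrite -{2}(ln_exp d); apply: ln_le; [lra | apply: exp_ineq1_le]. Qed.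

Lemma INR_pow2 k : INR (2 ^ k) = 2 ^ k.
Proof. by elim: k => [|k IH] //=; rewrite expnS mult_INR IH /=; lra. Qed.

Lemma log2_pow2_le K n : (2 ^ K <= n)%N -> INR K <= log2 (INR n).
Proof.
move=> Kn; have l2 := ln_lt_2.
have : ln (2 ^ K) <= ln (INR n).
  by apply: ln_le; [apply: pow_lt; lra | rewrite -INR_pow2; apply/le_INR/leP].
rewrite ln_pow /log2; last lra.
by move=> h; apply: (Rmult_le_reg_r (ln 2)); [lra | rewrite /Rdiv Rmult_assoc Rinv_l; lra].
Qed.

Lemma mul_le_pow2 x y c : 0 < x -> 0 < y -> log2 x + log2 y <= INR c -> x * y <= 2 ^ c.
Proof.
move=> x0 y0 xyc; have l2 := ln_lt_2.
have : ln (x * y) <= ln (2 ^ c).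
  rewrite ln_mult // ln_pow; last lra.
  have : (log2 x + log2 y) * ln 2 = ln x + ln y by rewrite /log2; field; lra.
  nra.
have p0 : 0 < 2 ^ c by apply: pow_lt; lra.
by case/Rle_lt_or_eq_dec => [/ln_lt_inv lt | /ln_inv eq]; [left; apply: lt | right; apply: eq];
  nra.
Qed.

Lemma log2_le_sqrt t : 1 <= t -> log2 t <= 4 * sqrt t.
Proof.
move=> t1; have s0 : 0 < sqrt t by apply: sqrt_lt_R0; lra.
have lnt : ln t = 2 * ln (sqrt t).
  by rewrite -{1}(sqrt_sqrt t) ?ln_mult; lra.
have lns : 1 + ln (sqrt t) <= sqrt t by rewrite -{2}(exp_ln (sqrt t)) //; apply: exp_ineq1_le.
have ln2 := ln_lt_2.
have : log2 t * ln 2 = ln t by rewrite /log2; field; lra.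
have : 0 <= ln t by rewrite -ln_1; apply: ln_le; lra.
nra.
Qed.

Lemma log2_sublinear eps t : 0 < eps -> ((13 + eps) / eps) ^ 2 <= t ->
  2 * log2 t + 5 + eps <= eps * t.
Proof.
move=> e0; set Q := (13 + eps) / eps => Qt.
have Q0 : 0 <= Q by rewrite /Q; apply: Rle_mult_inv_pos; lra.
have Qe : Q * eps = 13 + eps by rewrite /Q; field; lra.
have Q1 : 1 <= Q by nra.
have t1 : 1 <= t by nra.
have s2 : sqrt t * sqrt t = t by apply: sqrt_sqrt; lra.
have Qs : Q <= sqrt t by rewrite -(sqrt_pow2 Q) //; apply: sqrt_le_1_alt.
have := log2_le_sqrt t1; nra.
Qed.

Lemma eventually_log2_sublinear eps : 0 < eps -> exists N, forall n, (N <= n)%N ->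
  1 < log2 (INR n) /\ 2 * log2 (log2 (INR n)) + 5 + eps <= eps * log2 (INR n).
Proof.
move=> e0; have [K K_large] := INR_unbounded (((13 + eps) / eps) ^ 2 + 1).
exists (2 ^ K)%N => n /log2_pow2_le Kn.
have := pow2_ge_0 ((13 + eps) / eps).
split; [lra | apply: log2_sublinear => //; lra].
Qed.

(* The bad part of a total mass M weighs at most m M / X <= M / t. *)
Lemma good_share_lower_bound (M X A m t : R) : 0 < X -> 1 < t -> 0 <= M ->
  m * t <= X -> M * X <= A * X + m * M -> M * (t - 1) <= A * t.
Proof.
move=> X0 t1 M0 mt mass.
have : M * X * (t - 1) <= A * X * t by nra.
by move=> h; apply: (Rmult_le_reg_l X) => //; nra.
Qed.

Lemma redundancy_le_of_card n (C : pred (n.-tuple bool)) t eps : 0 < t -> 0 < eps ->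
  2 ^ n <= 6 * t * (1 + eps / 2) * INR #|C| ->
  redundancy C <= log2 t + log2 6 + eps.
Proof.
move=> t0 e0 large; have l2 := ln_lt_2.
have M0 : 0 < 2 ^ n by apply: pow_lt; lra.
have C0 : 0 < INR #|C|.
  by case: (Rle_lt_or_eq_dec _ _ (pos_INR #|C|)) => // C0; rewrite -C0 in large; nra.
have lnM := ln_le M0 large.
rewrite ln_pow ?(ln_mult (6 * t * (1 + eps / 2))) ?(ln_mult (6 * t)) ?(ln_mult 6 t) in lnM;
  try nra.
have := ln1p_le (ltac:(lra) : 0 <= eps / 2).
have E a : a / ln 2 * ln 2 = a by field; lra.
move: (E (ln (INR #|C|))) (E (ln t)) (E (ln 6)) => EC Et E6 small.
rewrite /redundancy /log2; apply: (Rmult_le_reg_r (ln 2)); first lra.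
nra.
Qed.

Lemma redundancy_code_le n eps : (0 < n)%N -> 0 < eps -> 1 < log2 (INR n) ->
  2 * log2 (log2 (INR n)) + 5 + eps <= eps * log2 (INR n) ->
  exists a0 a1, (a0 < 3)%N /\ (a1 < Pn n)%N /\
    redundancy (code n a0 a1) <= log2 (log2 (INR n)) + log2 6 + eps.
Proof.
set t := log2 (INR n); set l := log2 t => n0 e0 t1 small.
have [a0 [a1 [a0_3 a1_P dense]]] := exists_large_code n.
exists a0, a1; do 2!split=> //; apply: redundancy_le_of_card => //; first lra.
set L := (Pn n).-1./2 in dense; set C := #|code n a0 a1| in dense *.
set A := #|[pred x | ALL L x]| in dense.
have l0 : 0 <= l.
  have l2 := ln_lt_2; have : 0 < ln t by rewrite -ln_1; apply: ln_increasing; lra.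
  by rewrite /l /log2; move=> ?; apply: Rle_mult_inv_pos; lra.
have L_ceil : L = `|Num.ceil (t + l)|%N by rewrite /L /Pn addn1 /= mul2n doubleK.
have [tl_L L_tl] := @ceil_bounds (t + l) ltac:(lra).
rewrite -L_ceil in tl_L L_tl.
have PL : INR (Pn n) = 2 * INR L + 1.
  by rewrite Pn_odd -/L -addnn S_INR -plusE plus_INR; lra.
have nR0 : 0 < INR n by apply/lt_0_INR/ltP.
have nt : INR n * t <= 2 ^ L by apply: mul_le_pow2 => //; lra.
have mass : 2 ^ n * 2 ^ L <= INR A * 2 ^ L + INR n * 2 ^ n.
  have := le_INR _ _ (elimT leP (card_ALL_lower n L)).
  by rewrite plus_INR !mult_INR !INR_pow2.
have denseR : INR A <= 3 * INR (Pn n) * INR C.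
  have -> : 3 = INR 3 by rewrite /=; lra.
  by have := le_INR _ _ (elimT leP dense); rewrite !mult_INR.
have M0 : 0 < 2 ^ n by apply: pow_lt; lra.
have := good_share_lower_bound (pow_lt 2 L ltac:(lra)) t1 (Rlt_le _ _ M0) nt mass.
have C0 := pos_INR C.
have AC : INR A * t <= 3 * (2 * INR L + 1) * INR C * t.
  by apply: Rmult_le_compat_r; rewrite -?PL; lra.
have LC : 3 * (2 * INR L + 1) * (INR C * t) <= 6 * (t - 1) * (1 + eps / 2) * (INR C * t).
  by apply: Rmult_le_compat_r; nra.
move=> Mt; apply: (Rmult_le_reg_r (t - 1)); lra.
Qed.

End Asymptotics.

Theorem theorem10 :
  (forall n a0 a1 : nat, (2 <= n)%N -> (a0 < 3)%N -> (a1 < Pn n)%N ->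
     two_read_code 4 (code n a0 a1)) /\
  (forall eps : R, Rlt 0 eps ->
     exists N : nat, forall n : nat, (N <= n)%N ->
       exists a0 a1 : nat, (a0 < 3)%N /\ (a1 < Pn n)%N /\
         Rle (redundancy (code n a0 a1))
             (Rplus (Rplus (log2 (log2 (INR n))) (log2 6)) eps)).
Proof.
split=> [n a0 a1 _ _ _ | eps e0]; first exact: code_two_read.
have [N large] := eventually_log2_sublinear e0.
exists (maxn N 1) => n; rewrite geq_max => /andP[/large[t1 small] n0].
exact: redundancy_code_le.
Qed.
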